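(* In the $n$-dimensional alcove gambler's ruin environment with a state-independent differentiable policy $\pi_{\vec\theta}$, for a trajectory starting at $\vec\eta\in\mathcal{D}^n_m$ and terminating at $\vec\nu\in\mathcal{H}^n_m$, the single-trajectory REINFORCE policy-gradient estimate is \[ \nabla_{\vec\theta} J = \Big[\sum_{i=1}^n (\nu_i - \eta_i)\,\nabla_{\vec\theta}\log\pi(a = \vec e_i\mid\vec\theta)\Big]\, G_{\vec\eta\vec\nu}, \] where $G_{\vec\eta\vec\nu} = \lambda_{\vec\nu} - \sum_{i=1}^n(\nu_i-\eta_i)$; hence the distribution of the gradient is obtained from the distribution of the terminal state $\vec\nu$, with $\Pr\{\vec s_T=\vec\nu\} = b_{\vec\eta\vec\nu'}\prod_{i}\pi(\vec e_i\mid\vec\theta)^{\nu'_i-\eta_i}\,\pi(a=\vec\nu-\vec\nu'\mid\vec\theta)$, where $\vec\nu'\in\mathcal{D}^n_m$ is the interior neighbour of $\vec\nu$ and $b_{\vec\eta\vec\nu'}$ is the number of positive-unit-step lattice paths from $\vec\eta$ to $\vec\nu'$ staying in $\mathcal{D}^n_m$.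
   Context: $\mathcal{D}^n_m = \{(x_1,\dots,x_n)\in\mathbb{Z}^n : x_1 > x_2 > \cdots > x_n > x_1 - m\}$ and $\mathcal{H}^n_m = \{x : x_i = x_{i+1} \text{ for some } 1\le i<n\}\cup\{x : x_1 - x_n = m\}$. The environment has states $\mathcal{D}^n_m\cup\mathcal{H}^n_m$, actions $\vec e_1,\dots,\vec e_n$ (action $\vec e_i$ moves $x$ to $x+\vec e_i$), terminating states $\mathcal{H}^n_m$, undiscounted reward $-1$ per step plus bonus $\lambda_{\vec s}$ on reaching terminating $\vec s$. The policy does not observe the state. The REINFORCE estimate with batch size one is $\big(\sum_t\nabla_{\vec\theta}\log\pi(a_t\mid\vec\theta)\big)G$, $G$ being the episodic return. *)

From HB Require Import structures.
From mathcomp Require Import all_boot all_order all_algebra.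
From mathcomp Require Import all_classical all_reals all_analysis.
Set Implicit Arguments. Unset Strict Implicit. Unset Printing Implicit Defensive.
Import Order.TTheory GRing.Theory Num.Theory.
Import numFieldNormedType.Exports.
Local Open Scope ring_scope.

(* States of the n-dimensional alcove gambler's ruin: integer vectors
   x = (x_1,...,x_n), coordinate x_{k+1} being stored at index k : 'I_n. *)
Definition state (n : nat) := {ffun 'I_n -> int}.

Definition inD (n m : nat) (x : state n) : bool :=
  [forall i : 'I_n, forall j : 'I_n, (j == i.+1 :> nat) ==> (x j < x i)] &&
  [forall i : 'I_n, forall j : 'I_n,
     ((i == 0%N :> nat) && (j == n.-1 :> nat)) ==> (x j > x i - m%:Z)].

Definition inH (n m : nat) (x : state n) : bool :=
  [exists i : 'I_n, exists j : 'I_n, (j == i.+1 :> nat) && (x i == x j)] ||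
  [exists i : 'I_n, exists j : 'I_n,
     [&& (i == 0%N :> nat), (j == n.-1 :> nat) & (x i - x j == m%:Z)]].

Definition step (n : nat) (x : state n) (a : 'I_n) : state n :=
  [ffun i => x i + ((i == a) : nat)%:Z].

Definition traj (n : nat) (x : state n) (s : seq 'I_n) (t : nat) : state n :=
  foldl (@step n) x (take t s).

Definition terminates_at (n m : nat) (eta nu : state n) (s : seq 'I_n) : bool :=
  [forall t : 'I_(size s), inD m (traj eta s t)] && (traj eta s (size s) == nu) &&
  inH m nu.

Definition episodic_return (R : realType) (n m : nat) (lam : state n -> R)
    (eta : state n) (s : seq 'I_n) : R :=
  \sum_(t < size s)
    (-1 + (if inH m (traj eta s t.+1) then lam (traj eta s t.+1) else 0)).

Definition grad (R : realType) (d : nat) (f : 'rV[R]_d -> R) (th : 'rV[R]_d)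
  : 'rV[R]_d := \row_(k < d) 'D_(delta_mx 0 k) f th.

Definition gradlog (R : realType) (n d : nat) (pi : 'rV[R]_d -> 'I_n -> R)
    (th : 'rV[R]_d) (a : 'I_n) : 'rV[R]_d :=
  grad (fun th' => ln (pi th' a)) th.

Definition reinforce (R : realType) (n m d : nat) (pi : 'rV[R]_d -> 'I_n -> R)
    (lam : state n -> R) (th : 'rV[R]_d) (eta : state n) (s : seq 'I_n)
  : 'rV[R]_d :=
  episodic_return m lam eta s *: \sum_(a <- s) gradlog pi th a.

Definition seqprob (R : realType) (n d : nat) (pi : 'rV[R]_d -> 'I_n -> R)
    (th : 'rV[R]_d) (s : seq 'I_n) : R :=
  \prod_(a <- s) pi th a.

(* Pr{ s_T = nu }: sum over the termination time k of the probability of all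
   length-k action sequences whose episode terminates at time k in nu
   (a series of nonnegative terms, summed in the extended reals) *)
Definition PrTerm (R : realType) (n m d : nat) (pi : 'rV[R]_d -> 'I_n -> R)
    (th : 'rV[R]_d) (eta nu : state n) : \bar R :=
  (\sum_(k <oo)
     (\sum_(s : k.-tuple 'I_n) (terminates_at m eta nu s)%:R * seqprob pi th s)%:E)%E.

Definition D_path (n m : nat) (x y : state n) (s : seq 'I_n) : bool :=
  [forall t : 'I_(size s).+1, inD m (traj x s t)] && (traj x s (size s) == y).

(* Every positive-unit-step path from x
   to y has length sum_i (y_i - x_i), so it suffices to count action sequences
   of that length (if that sum is negative, no sequence of length |sum| ends at
   y, so the count is 0, as it should be). *)
Definition nb_paths (n m : nat) (x y : state n) : nat :=
  #|[set s : (absz (\sum_i (y i - x i))).-tuple 'I_n | D_path m x y s]|.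

From HB Require Import structures.
From mathcomp Require Import all_boot all_order all_algebra.
From mathcomp Require Import all_classical all_reals all_analysis.
From mathcomp Require Import zify lra.
Set Implicit Arguments. Unset Strict Implicit. Unset Printing Implicit Defensive.
Import Order.TTheory GRing.Theory Num.Theory.
Import numFieldNormedType.Exports.
Local Open Scope ring_scope.

(* Along an action sequence, coordinate i of the state grows by the number of
   occurrences of e_i, so both the return and the summed score functions of an
   episode depend only on nu - eta.  For the terminal distribution: an interior
   state can leave D^n_m through a facet x_i = x_(i+1) only by e_(i+1), and
   through x_1 - x_n = m only by e_1, so every episode ending at nu = nu' + e_j
   ends with e_j, and these episodes are exactly the D^n_m-paths from eta to
   nu' followed by e_j.  They all have the same length and probability, so the
   series over termination times has a single nonzero term. *)

Section CountMem.
Variables (I : finType) (s : seq I).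

Lemma sumr_count_mem (V : nmodType) (F : I -> V) :
  \sum_(a <- s) F a = \sum_i F i *+ count_mem i s.
Proof.
elim: s => [|a s' IH]; first by rewrite big_nil big1.
rewrite big_cons IH /=; under [RHS]eq_bigr do rewrite mulrnDr.
rewrite big_split /=; congr (_ + _).
rewrite (bigD1 a) //= eqxx mulr1n big1 ?addr0 // => i /negbTE.
by rewrite eq_sym => ->.
Qed.

Lemma prodr_count_mem (R : comPzSemiRingType) (F : I -> R) :
  \prod_(a <- s) F a = \prod_i F i ^+ count_mem i s.
Proof.
elim: s => [|a s' IH]; first by rewrite big_nil big1.
rewrite big_cons IH /=; under [RHS]eq_bigr do rewrite exprD.
rewrite big_split /=; congr (_ * _).
rewrite (bigD1 a) //= eqxx expr1 big1 ?mulr1 // => i /negbTE.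
by rewrite eq_sym => ->.
Qed.

Lemma sum_count_mem : (\sum_i count_mem i s)%N = size s.
Proof.
rewrite -sum1_size (sumr_count_mem (fun=> 1%N)).
by apply: eq_bigr => i _; rewrite natn.
Qed.

End CountMem.

Section Trajectories.
Variable n : nat.
Implicit Types (x y : state n) (s p : seq 'I_n).

Lemma foldl_step x s i : foldl (@step n) x s i = x i + (count_mem i s)%:Z.
Proof.
elim: s x => [|a s IH] x /=; first by rewrite addr0.
by rewrite IH ffunE -addrA PoszD [a == i]eq_sym.
Qed.

Lemma traj_size_sub x s i : traj x s (size s) i - x i = (count_mem i s)%:Z.
Proof. by rewrite /traj take_size foldl_step addrC addKr. Qed.

Lemma sum_traj_size_sub x s :
  \sum_i (traj x s (size s) i - x i) = (size s)%:Z.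
Proof.
under eq_bigr do rewrite traj_size_sub.
by rewrite -(big_morph Posz PoszD (erefl 0%:Z)) sum_count_mem.
Qed.

Lemma sumr_traj (V : zmodType) x s (F : 'I_n -> V) :
  \sum_(a <- s) F a = \sum_i F i *~ (traj x s (size s) i - x i).
Proof.
by rewrite sumr_count_mem; apply: eq_bigr => i _; rewrite traj_size_sub pmulrn.
Qed.

Lemma prodr_traj (R : comUnitRingType) x s (F : 'I_n -> R) :
  \prod_(a <- s) F a = \prod_i F i ^ (traj x s (size s) i - x i).
Proof. by rewrite prodr_count_mem; apply: eq_bigr => i _; rewrite traj_size_sub. Qed.

Lemma natr_size_traj (R : pzRingType) x s :
  (size s)%:R = \sum_i (traj x s (size s) i - x i)%:~R :> R.
Proof. by rewrite -[in LHS]sum1_size natr_sum (sumr_traj x). Qed.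

Lemma traj_rcons x p a t : (t <= size p)%N -> traj x (rcons p a) t = traj x p t.
Proof. by move=> le_tp; rewrite /traj -cats1 takel_cat. Qed.

Lemma traj_rcons_size x p a :
  traj x (rcons p a) (size p).+1 = step (traj x p (size p)) a.
Proof. by rewrite /traj take_oversize ?size_rcons // take_size foldl_rcons. Qed.

Lemma step_injl (a : 'I_n) : injective ((@step n)^~ a).
Proof.
move=> x y /ffunP exy; apply/ffunP => i.
by have := exy i; rewrite !ffunE => /addIr.
Qed.

Lemma D_path_size m x y p : D_path m x y p -> size p = absz (\sum_i (y i - x i)).
Proof. by case/andP=> _ /eqP <-; rewrite sum_traj_size_sub. Qed.

End Trajectories.

Section Alcove.
Variables n m : nat.
Implicit Types (x y : state n) (s p : seq 'I_n).

Lemma inD_notinH x : inD m x -> ~~ inH m x.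
Proof.
case/andP=> /forallP desc /forallP width; apply/norP; split.
- apply/existsP => -[i /existsP [j /andP [/eqP ji /eqP xij]]].
  by have := implyP (forallP (desc i) j) (introT eqP ji); rewrite xij ltxx.
- apply/existsP => -[i /existsP [j /and3P [i0 jn /eqP xij]]].
  by have := implyP (forallP (width i) j) (introT andP (conj i0 jn)); lia.
Qed.

Lemma inD_step_tie x (i i' a : 'I_n) : inD m x -> i' = i.+1 :> nat ->
  step x a i = step x a i' -> a = i'.
Proof.
case/andP=> /forallP desc _ i'i.
have := implyP (forallP (desc i) i') (introT eqP i'i); rewrite !ffunE /=.
by case: (eqVneq i' a) => [->//|_]; case: (i == a) => /=; lia.
Qed.

Lemma inD_step_width x (i i' a : 'I_n) : inD m x -> i = 0%N :> nat ->
  i' = n.-1 :> nat -> step x a i - step x a i' = m%:Z -> a = i.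
Proof.
case/andP=> _ /forallP width i0 i'n.
have i0n : (i == 0%N :> nat) && (i' == n.-1 :> nat) by rewrite i0 i'n !eqxx.
have := implyP (forallP (width i) i') i0n; rewrite !ffunE /=.
by case: (eqVneq i a) => [->//|_]; case: (i' == a) => /=; lia.
Qed.

Lemma exit_action_unique x y (a b : 'I_n) : inD m x -> inD m y ->
  step x a = step y b -> inH m (step x a) -> a = b.
Proof.
move=> Dx Dy exy /orP[/existsP[i /existsP[i' /andP[/eqP i'i /eqP tie]]]|
  /existsP[i /existsP[i' /and3P[/eqP i0 /eqP i'n /eqP width]]]].
- rewrite (inD_step_tie Dx i'i tie); apply/esym/(inD_step_tie Dy i'i).
  by rewrite -exy.
- rewrite (inD_step_width Dx i0 i'n width); apply/esym/(inD_step_width Dy i0 i'n).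
  by rewrite -exy.
Qed.

Lemma terminates_at_nonnil x y s : inD m x -> terminates_at m x y s -> s != [::].
Proof.
move=> Dx /andP[/andP[_ /eqP xy] Hy]; apply: contraTneq Hy => s0.
by rewrite -xy s0 /traj inD_notinH.
Qed.

Lemma terminates_at_rcons x y p a : inH m (step y a) ->
  terminates_at m x (step y a) (rcons p a) = D_path m x y p.
Proof.
move=> Hya; rewrite /terminates_at /D_path Hya andbT size_rcons traj_rcons_size.
rewrite (inj_eq (@step_injl n a)); congr (_ && _); apply/forallP/forallP => D t.
- by have := D t; rewrite traj_rcons // -ltnS.
- by rewrite traj_rcons ?D // -ltnS.
Qed.

Lemma terminates_at_last x y a s : inD m x -> inD m y ->
  terminates_at m x (step y a) s -> exists p, s = rcons p a.
Proof.
move=> Dx Dy Ts; have := terminates_at_nonnil Dx Ts.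
case/lastP: s Ts => // p b /andP[/andP[/forallP D /eqP xy] Hy] _; exists p.
have Dp : inD m (traj x p (size p)).
  have lt_p : (size p < size (rcons p b))%N by rewrite size_rcons.
  by have := D (Ordinal lt_p); rewrite /= traj_rcons.
rewrite size_rcons traj_rcons_size in xy.
by rewrite (exit_action_unique Dp Dy xy) // xy.
Qed.

End Alcove.

Section Reinforce.
Variables (R : realType) (n m d : nat).
Variables (pi : 'rV[R]_d -> 'I_n -> R) (lam : state n -> R) (th : 'rV[R]_d).
Implicit Types (x y : state n) (s : seq 'I_n).

Lemma episodic_return_terminates x y s : inD m x -> terminates_at m x y s ->
  episodic_return m lam x s = lam y - (size s)%:R.
Proof.
move=> Dx Ts; have := terminates_at_nonnil Dx Ts.
case/lastP: s Ts => // p a /andP[/andP[/forallP D /eqP xy] Hy] _.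
rewrite size_rcons in xy.
rewrite /episodic_return size_rcons big_ord_recr /= xy Hy.
rewrite (eq_bigr (fun=> -1)) => [|t _]; last first.
  have lt_t : (t.+1 < size (rcons p a))%N by rewrite size_rcons ltnS.
  by rewrite (negbTE (inD_notinH (D (Ordinal lt_t)))) addr0.
by rewrite sumr_const card_ord mulNrn -addn1 natrD; lra.
Qed.

Lemma reinforce_terminates x y s : inD m x -> terminates_at m x y s ->
  reinforce m pi lam th x s =
  (lam y - \sum_i (y i - x i)%:~R) *: \sum_i ((y i - x i)%:~R *: gradlog pi th i).
Proof.
move=> Dx Ts; rewrite /reinforce (episodic_return_terminates Dx Ts).
have /andP[/andP[_ /eqP <-] _] := Ts.
rewrite (natr_size_traj _ x s) (sumr_traj x s); congr (_ *: _).
by apply: eq_bigr => i _; rewrite scaler_int.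
Qed.

End Reinforce.

Lemma eseries_pred1 (R : realFieldType) (f : (\bar R)^nat) (k : nat) :
  (forall i, i != k -> f i = 0%E) -> (\sum_(i <oo) f i)%E = f k.
Proof.
move=> f0; apply: cvg_lim => //; apply: cvg_near_cst; near=> N.
rewrite (bigD1_seq k) ?mem_iota ?iota_uniq //=; last first.
  by near: N; exists k.+1 => // i /= lt_ki; rewrite add0n subn0.
by rewrite big1 ?adde0 // => i /f0.
Unshelve. all: by end_near.
Qed.

Section TerminalDistribution.
Variables (R : realType) (n m d : nat).
Variables (pi : 'rV[R]_d -> 'I_n -> R) (th : 'rV[R]_d).
Variables (eta nu' : state n) (j : 'I_n).
Hypotheses (Deta : inD m eta) (Dnu' : inD m nu') (Hnu : inH m (step nu' j)).

Local Notation nu := (step nu' j).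
Local Notation len := (absz (\sum_i (nu' i - eta i))).

Lemma size_terminates s : terminates_at m eta nu s -> size s = len.+1.
Proof.
move=> Ts; have [p sE] := terminates_at_last Deta Dnu' Ts.
by move: Ts; rewrite sE terminates_at_rcons // size_rcons => /D_path_size ->.
Qed.

Lemma seqprob_terminates s : terminates_at m eta nu s ->
  seqprob pi th s = \prod_i pi th i ^ (nu' i - eta i) * pi th j.
Proof.
move=> Ts; have [p sE] := terminates_at_last Deta Dnu' Ts.
move: Ts; rewrite sE terminates_at_rcons // => /andP[_ /eqP <-].
by rewrite /seqprob big_rcons /= (prodr_traj eta p).
Qed.

Lemma card_terminates :
  #|[set s : len.+1.-tuple 'I_n | terminates_at m eta nu s]| = nb_paths m eta nu'.
Proof.
pose ext (p : len.-tuple 'I_n) := rcons_tuple p j.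
have ext_inj : injective ext.
  by move=> p q /(congr1 val) pq; apply/val_inj/(rcons_injl j pq).
rewrite /nb_paths -(card_imset _ ext_inj); congr #|pred_of_set _|.
apply/setP => s; rewrite inE; apply/idP/imsetP => [Ts|[p]].
- have [p sE] := terminates_at_last Deta Dnu' Ts.
  have /eqP p_len : size p == len by rewrite -eqSS -(size_rcons p j) -sE size_tuple.
  exists (Tuple (introT eqP p_len)); last exact: val_inj.
  by rewrite inE -(terminates_at_rcons _ _ Hnu) -sE.
- by rewrite inE => Dp ->; rewrite terminates_at_rcons.
Qed.

Lemma sum_tuples_terminates k :
  \sum_(s : k.-tuple 'I_n) (terminates_at m eta nu s)%:R * seqprob pi th s =
  if k == len.+1 then
    (nb_paths m eta nu')%:R * (\prod_i pi th i ^ (nu' i - eta i)) * pi th j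
  else 0.
Proof.
case: eqP => [->|ne]; last first.
  apply: big1 => s _; case Ts: (terminates_at _ _ _ _); last by rewrite mul0r.
  by case: ne; rewrite -(size_terminates Ts) size_tuple.
rewrite -card_terminates -mulrA mulr_natl -sumr_const [RHS]big_mkcond /=.
apply: eq_bigr => s _; rewrite inE.
by case: ifP => [/seqprob_terminates ->|_]; rewrite ?mul1r ?mul0r.
Qed.

Lemma PrTerm_step : PrTerm m pi th eta nu =
  ((nb_paths m eta nu')%:R * (\prod_i pi th i ^ (nu' i - eta i)) * pi th j)%:E.
Proof.
rewrite /PrTerm (eseries_pred1 (k := len.+1)) => [|k]; rewrite sum_tuples_terminates.
  by rewrite eqxx.
by move/negbTE ->.
Qed.

End TerminalDistribution.

Theorem corollary2 (R : realType) (n m d : nat)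
    (pi : 'rV[R]_d -> 'I_n -> R) (lam : state n -> R) (th : 'rV[R]_d)
    (eta nu : state n) :
  (forall th' a, 0 < pi th' a) ->
  (forall th', \sum_a pi th' a = 1) ->
  (forall a th', differentiable (fun th'' => pi th'' a) th') ->
  inD m eta -> inH m nu ->
  (forall s : seq 'I_n, terminates_at m eta nu s ->
     reinforce m pi lam th eta s =
     (lam nu - \sum_i (nu i - eta i)%:~R) *:
       \sum_i ((nu i - eta i)%:~R *: gradlog pi th i))
  /\
  (forall (nu' : state n) (j : 'I_n), inD m nu' -> nu = step nu' j ->
     PrTerm m pi th eta nu =
     ((nb_paths m eta nu')%:R * (\prod_i pi th i ^ (nu' i - eta i)) * pi th j)%:E).
Proof.
move=> _ _ _ Deta Hnu; split=> [s|nu' j Dnu' nuE].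
  exact: reinforce_terminates.
by rewrite nuE in Hnu *; exact: PrTerm_step.
Qed.
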